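(* Let $n$ be even with $v_2(n)$ odd. Then $D_{S(n)^*}=C_{S(n)^*}=2$.
   Context: For a natural number $n$, $\mathbb Z_n=\mathbb Z/n\mathbb Z$, $S(n)=\{x^2:x\in\mathbb Z_n\}$, $S(n)^*=S(n)\setminus\{0\}$. For $A\subseteq\mathbb Z_n$, a sequence $(y_1,\dots,y_t)$ ($t\ge1$) in $\mathbb Z_n$ is an $A$-weighted zero-sum sequence if there exist $a_1,\dots,a_t\in A$ with $\sum a_iy_i=0$; a sequence has an $A$-weighted zero-sum subsequence if some nonempty subsequence is an $A$-weighted zero-sum sequence. $D_A(n)$ is the least positive integer $t$ such that every sequence of length $t$ in $\mathbb Z_n$ has an $A$-weighted zero-sum subsequence; $C_A(n)$ is the least positive integer $t$ such that every sequence of length $t$ in $\mathbb Z_n$ has an $A$-weighted zero-sum subsequence consisting of consecutive terms. $D_{S(n)^*}=D_{S(n)^*}(n)$, $C_{S(n)^*}=C_{S(n)^*}(n)$. $v_2(n)$ is the exponent of $2$ in $n$. *)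

(* Z_n is modelled as 'Z_n; the main theorem's hypotheses
   (n even, v_2(n) odd) force n >= 2, so 'Z_n is genuinely Z/nZ. *)
From mathcomp Require Import all_boot all_order all_algebra.
Set Implicit Arguments. Unset Strict Implicit. Unset Printing Implicit Defensive.
Import GRing.Theory.
Local Open Scope ring_scope.

Definition Ssq (n : nat) : {set 'Z_n} := [set x * x | x : 'Z_n].
Definition Sstar (n : nat) : {set 'Z_n} := Ssq n :\ 0.

Definition wzs (n : nat) (A : {set 'Z_n}) (y : seq 'Z_n) : Prop :=
  (0 < size y)%N /\
  exists a : seq 'Z_n, size a = size y /\ all (fun x => x \in A) a /\
    \sum_(i < size y) a`_i * y`_i = 0.

Definition has_wzs_sub (n : nat) (A : {set 'Z_n}) (y : seq 'Z_n) : Prop :=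
  exists z, subseq z y /\ wzs A z.

Definition has_wzs_cons (n : nat) (A : {set 'Z_n}) (y : seq 'Z_n) : Prop :=
  exists z, infix z y /\ wzs A z.

Definition least_pos_len (n : nat) (P : seq 'Z_n -> Prop) (t : nat) : Prop :=
  (0 < t)%N /\ (forall y : seq 'Z_n, size y = t -> P y) /\
  (forall t', (0 < t' < t)%N -> ~ (forall y : seq 'Z_n, size y = t' -> P y)).

Definition D_is (n : nat) (A : {set 'Z_n}) (t : nat) : Prop :=
  least_pos_len (has_wzs_sub A) t.
Definition C_is (n : nat) (A : {set 'Z_n}) (t : nat) : Prop :=
  least_pos_len (has_wzs_cons A) t.

From mathcomp Require Import all_boot all_order all_algebra.
From mathcomp Require Import zify.
Import GRing.Theory.

Set Implicit Arguments.
Unset Strict Implicit.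
Unset Printing Implicit Defensive.

(* Write n = 2h.  Since n is even, h * x in Z_n is 0 for even x and h for odd x;
   hence h kills x, or y, or x + y, and a length-two sequence always has a
   consecutive zero-sum subsequence with the single weight h.  The weight h is
   admissible when v_2(n) = 2j + 1 is odd: with n = 2^(2j+1) m, m odd, one has
   (2^j m)^2 = h m = h + n (m - 1)/2.  Finally the one-term sequence [1] has no
   weighted zero-sum subsequence, as that would need the weight 0. *)

Lemma least_pos_len2 (n : nat) (P : seq 'Z_n -> Prop) :
  (forall y, size y = 2 -> P y) -> (exists y, size y = 1 /\ ~ P y) ->
  least_pos_len P 2.
Proof.
move=> P2 [y1 [y1_1 not_Py1]]; split=> //; split=> // t' /andP[t'_gt0 t'_lt2].
have -> : t' = 1 by lia.
by move=> P1; apply: not_Py1; apply: P1.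
Qed.

Lemma has_wzs_cons_sub (n : nat) (A : {set 'Z_n}) (y : seq 'Z_n) :
  has_wzs_cons A y -> has_wzs_sub A y.
Proof. by case=> z [/infixW z_y wz]; exists z. Qed.

Section WeightedZeroSum.
Local Open Scope ring_scope.
Variables (n : nat) (A : {set 'Z_n}).

Lemma wzs_const_weight (a : 'Z_n) (y : seq 'Z_n) :
  a \in A -> (0 < size y)%N -> a * \sum_(x <- y) x = 0 -> wzs A y.
Proof.
move=> aA y_gt0 a_y; split=> //; exists (nseq (size y) a); rewrite size_nseq.
split=> //; split; first by apply/allP=> x /nseqP[->].
rewrite (big_nth 0) big_mkord mulr_sumr in a_y; rewrite -[RHS]a_y.
by apply: eq_bigr => i _; rewrite nth_nseq ltn_ord.
Qed.

Lemma has_wzs_cons_size2 (a : 'Z_n) : a \in A ->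
  (forall x y, a * x != 0 -> a * y != 0 -> a * (x + y) = 0) ->
  forall y, size y = 2 -> has_wzs_cons A y.
Proof.
move=> aA a_sum [|x [|y []]] // _.
have wzs1 z : a * z = 0 -> wzs A [:: z].
  by move=> az; apply: (wzs_const_weight aA); rewrite ?big_seq1.
have [ax | ax] := eqVneq (a * x) 0.
  by exists [:: x]; rewrite (prefix_infix [:: x] [:: y]); split=> //; apply: wzs1.
have [ay | ay] := eqVneq (a * y) 0.
  by exists [:: y]; rewrite (suffix_infix [:: x] [:: y]); split=> //; apply: wzs1.
exists [:: x; y]; rewrite infix_refl; split=> //.
by apply: (wzs_const_weight aA); rewrite // big_cons big_seq1 a_sum.
Qed.

Lemma one_not_has_wzs_sub : 0 \notin A -> ~ has_wzs_sub A [:: 1].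
Proof.
move=> A'0 [z [z_sub [z_gt0 [a [a_size [aA a_z]]]]]].
have z1 : z = [:: 1].
  by apply/eqP; rewrite -(size_subseq_leqif z_sub).2 eqn_leq size_subseq.
subst z; case: a a_size aA a_z => [|b []] //= _.
by rewrite andbT big_ord1 /= mulr1 => bA b0; rewrite -b0 bA in A'0.
Qed.

End WeightedZeroSum.

Section HalfModulus.
Local Open Scope ring_scope.
Variable n : nat.
Hypotheses (n_gt1 : (1 < n)%N) (n_even : ~~ odd n).
Let h := n./2.

Lemma half_double : n = (h * 2)%N.
Proof. by rewrite muln2 even_halfK. Qed.

Lemma mul_half_Zp (x : 'Z_n) : h%:R * x = if odd (val x) then h%:R else 0.
Proof.
have hx : (h * val x = h * odd (val x) + n * (val x)./2)%N.
  by have := odd_double_half (val x); have := half_double; rewrite -muln2; nia.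
rewrite -[X in _ * X]natr_Zp -natrM hx.
by rewrite natrD !natrM pchar_Zp // mul0r addr0; case: odd; rewrite ?mulr1 ?mulr0.
Qed.

Lemma mul_half_add_eq0 (x y : 'Z_n) :
  h%:R * x != 0 -> h%:R * y != 0 -> h%:R * (x + y) = 0.
Proof.
rewrite mulrDr !mul_half_Zp; case: odd; case: odd; rewrite ?eqxx // => _ _.
by rewrite -natrD addnn -muln2 -half_double pchar_Zp.
Qed.

Lemma half_neq0 : h%:R != 0 :> 'Z_n.
Proof.
have := half_double; rewrite -val_eqE /= val_Zp_nat // modn_small; lia.
Qed.

Lemma half_is_square : odd (logn 2 n) -> h%:R \in Ssq n.
Proof.
move=> odd_log; have n_gt0 : (0 < n)%N by lia.
have [m] := pfactor_coprime (isT : prime 2) n_gt0; rewrite coprime2n => m_odd n_def.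
have {odd_log} [j log_n] : exists j, logn 2 n = j.*2.+1.
  by exists (logn 2 n)./2; rewrite -[in LHS](odd_double_half (logn 2 n)) odd_log.
have m_def := odd_double_half m; rewrite m_odd -muln2 in m_def.
have sq_def : (2 ^ j * m * (2 ^ j * m) = h + n * m./2)%N.
  move: n_def half_double m_def; rewrite log_n expnS -muln2 expnM.
  move: (2 ^ j)%N (m./2) => p q; rewrite /h; nia.
apply/imsetP; exists (2 ^ j * m)%:R => //.
by rewrite -natrM sq_def natrD natrM pchar_Zp // mul0r addr0.
Qed.

End HalfModulus.

Theorem mainTheorem6 (n : nat) :
  ~~ odd n -> odd (logn 2 n) ->
  D_is (Sstar n) 2 /\ C_is (Sstar n) 2.
Proof.
move=> n_even odd_log.
have n_gt1 : (1 < n)%N.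
  by case: n n_even odd_log => [|[|]] //; rewrite logn0.
have half_S : ((n./2)%:R : 'Z_n)%R \in Sstar n.
  by rewrite !inE half_neq0 // half_is_square.
have cons2 := has_wzs_cons_size2 half_S (mul_half_add_eq0 n_gt1 n_even).
have no_wzs1 : exists y : seq 'Z_n, size y = 1 /\ ~ has_wzs_sub (Sstar n) y.
  by exists [:: 1%R]; split=> //; apply: one_not_has_wzs_sub; rewrite !inE eqxx.
split; apply: least_pos_len2.
- by move=> y /cons2 /has_wzs_cons_sub.
- exact: no_wzs1.
- exact: cons2.
- by case: no_wzs1 => y [y_1 not_sub]; exists y; split=> // /has_wzs_cons_sub.
Qed.
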